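(* Let $m,n\in\mathbb{N}$ with $m\le n$. There exists $f_{n,m}\in\mathcal{NN}_{1,m+1}(2^{m+2}+1,1)$ such that for every $x=\sum_{i=1}^n2^{-i}x_i$ with $x_1,\dots,x_n\in\{0,1\}$, \[ f_{n,m}(x)=\Big(x_1,\dots,x_m,\ \sum_{i=m+1}^n 2^{m-i}x_i\Big)^\top. \] Moreover, for every $L\in\mathbb{N}$ there exists $f_{n,m,L}\in\mathcal{NN}_{1,2}(2^{\lceil m/L\rceil+2}+2,L)$ such that for every such $x$, \[ f_{n,m,L}(x)=\Big(\sum_{i=1}^m2^{m-i}x_i,\ \sum_{i=m+1}^n 2^{m-i}x_i\Big)^\top. \]
   Context: $\mathcal{NN}_{d,k}(W,L)$: set of maps $g:\mathbb{R}^d\to\mathbb{R}^k$ given by $g_0(x)=x$, $g_{\ell+1}(x)=\sigma(A_\ell g_\ell(x)+b_\ell)$ ($\ell=0,\dots,L-1$), $g(x)=A_Lg_L(x)+b_L$, with $A_\ell\in\mathbb{R}^{N_{\ell+1}\times N_\ell}$, $b_\ell\in\mathbb{R}^{N_{\ell+1}}$, $N_0=d$, $N_{L+1}=k$, $\max\{N_1,\dots,N_L\}\le W$, $\sigma(t)=\max\{t,0\}$ componentwise. In binary notation, the first output of $f_{n,m,L}$ is $\mathrm{Bin}\,x_1\cdots x_m.0$ and the last outputs are $\mathrm{Bin}\,0.x_{m+1}\cdots x_n$. *)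

From HB Require Import structures.
From mathcomp Require Import all_boot all_order all_algebra.
From mathcomp Require Import Rstruct.
Set Implicit Arguments. Unset Strict Implicit. Unset Printing Implicit Defensive.
Import Order.TTheory GRing.Theory Num.Theory.
Local Open Scope ring_scope.

Section Nets.
Variable R : realDomainType.

Definition relu_vec n (v : 'cV[R]_n) : 'cV[R]_n :=
  \col_i Num.max (v i 0) 0.

Inductive net : nat -> nat -> Type :=
| NOut : forall d k, 'M[R]_(k, d) -> 'cV[R]_k -> net d k
| NLayer : forall d N k, 'M[R]_(N, d) -> 'cV[R]_N -> net N k -> net d k.

Fixpoint realize d k (Phi : net d k) : 'cV[R]_d -> 'cV[R]_k :=
  match Phi in net d k return 'cV[R]_d -> 'cV[R]_k with
  | NOut _ _ A b => fun x => A *m x + b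
  | NLayer _ _ _ A b rest => fun x => realize rest (relu_vec (A *m x + b))
  end.

Fixpoint depth d k (Phi : net d k) : nat :=
  match Phi with
  | NOut _ _ _ _ => 0
  | NLayer _ _ _ _ _ rest => (depth rest).+1
  end.

Fixpoint width d k (Phi : net d k) : nat :=
  match Phi with
  | NOut _ _ _ _ => 0
  | NLayer _ N _ _ _ rest => maxn N (width rest)
  end.

Definition NN (d k W L : nat) (g : 'cV[R]_d -> 'cV[R]_k) : Prop :=
  exists Phi : net d k,
    [/\ depth Phi = L, (width Phi <= W)%N & forall x, g x = realize Phi x].

End Nets.

Definition ceil_div (m L : nat) : nat := (m + L.-1) %/ L.

From HB Require Import structures.
From mathcomp Require Import all_boot all_order all_algebra.
From mathcomp Require Import Rstruct.
From mathcomp Require Import zify ring lra.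
Import Order.TTheory GRing.Theory Num.Theory.
Local Open Scope ring_scope.
Set Implicit Arguments. Unset Strict Implicit.

(* For a natural number M, relu(M - kq + 1) - relu(M - kq) is the indicator of
   kq <= M.  Hence one hidden layer with 2T such neurons, read out with the
   backward differences of an arbitrary g, computes g (M %/ q) whenever
   M %/ q < T; a few more neurons pass the (nonnegative) input through.
   Scaling x by 2^n makes M = Bin x_1...x_n; with q = 2^(n-m) and T = 2^m a
   single such layer yields the m leading digits of M %/ q and the tail
   M - q (M %/ q).  For depth L, each layer instead maps (A, M) to
   (2^s A + M %/ q, M %% q), moving the next s = ceil(m/L) digits from the
   tail into the integer part. *)

Section NetCalculus.
Variable R : realDomainType.

Definition net_precomp d k p (A : 'M[R]_(k, d)) (b : 'cV[R]_k) (Psi : net R k p)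
    : net R d p :=
  match Psi in net _ k' p' return 'M[R]_(k', d) -> 'cV[R]_k' -> net R d p' with
  | NOut _ _ A' b' => fun A b => NOut (A' *m A) (A' *m b + b')
  | NLayer _ _ _ A' b' rest => fun A b => NLayer (A' *m A) (A' *m b + b') rest
  end A b.

Fixpoint net_comp d k p (Phi : net R d k) : net R k p -> net R d p :=
  match Phi in net _ d' k' return net R k' p -> net R d' p with
  | NOut _ _ A b => fun Psi => net_precomp A b Psi
  | NLayer _ _ _ A b rest => fun Psi => NLayer A b (net_comp rest Psi)
  end.

Lemma realize_precomp d k p A b (Psi : net R k p) (x : 'cV[R]_d) :
  realize (net_precomp A b Psi) x = realize Psi (A *m x + b).
Proof.
by case: Psi A b => [? ? A' b' | ? ? ? A' b' ?] A b /=; rewrite mulmxDr mulmxA addrA.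
Qed.

Lemma depth_precomp d k p A b (Psi : net R k p) :
  depth (net_precomp (d := d) A b Psi) = depth Psi.
Proof. by case: Psi A b. Qed.

Lemma width_precomp d k p A b (Psi : net R k p) :
  width (net_precomp (d := d) A b Psi) = width Psi.
Proof. by case: Psi A b. Qed.

Lemma realize_comp d k p (Phi : net R d k) (Psi : net R k p) x :
  realize (net_comp Phi Psi) x = realize Psi (realize Phi x).
Proof.
by elim: Phi Psi x => [? ? ? ? | ? ? ? ? ? ? IH] Psi x /=; rewrite ?realize_precomp ?IH.
Qed.

Lemma depth_comp d k p (Phi : net R d k) (Psi : net R k p) :
  depth (net_comp Phi Psi) = (depth Phi + depth Psi)%N.
Proof.
by elim: Phi Psi => [? ? ? ? | ? ? ? ? ? ? IH] Psi /=; rewrite ?depth_precomp ?IH.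
Qed.

Lemma width_comp d k p (Phi : net R d k) (Psi : net R k p) :
  width (net_comp Phi Psi) = maxn (width Phi) (width Psi).
Proof.
elim: Phi Psi => [? ? ? ? | ? ? ? ? ? ? IH] Psi /=.
  by rewrite width_precomp max0n.
by rewrite IH maxnA.
Qed.

Lemma NN_comp d k p W1 W2 L1 L2
    (f : 'cV[R]_d -> 'cV[R]_k) (g : 'cV[R]_k -> 'cV[R]_p) :
  NN W1 L1 f -> NN W2 L2 g -> NN (maxn W1 W2) (L1 + L2) (g \o f).
Proof.
move=> [Phi [dPhi wPhi ePhi]] [Psi [dPsi wPsi ePsi]].
exists (net_comp Phi Psi); split.
- by rewrite depth_comp dPhi dPsi.
- by rewrite width_comp; lia.
- by move=> x /=; rewrite realize_comp -ePhi -ePsi.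
Qed.

Lemma NN_widen d k W W' L (f : 'cV[R]_d -> 'cV[R]_k) :
  (W <= W')%N -> NN W L f -> NN W' L f.
Proof. by move=> leWW' [Phi [? wPhi ?]]; exists Phi; split => //; lia. Qed.

Lemma NN_affine d k W (A : 'M[R]_(k, d)) (b : 'cV[R]_k) :
  NN W 0 (fun x => A *m x + b).
Proof. by exists (NOut A b). Qed.

Lemma NN_layer d N k
    (B : 'M[R]_(N, d)) (c : 'cV[R]_N) (C : 'M[R]_(k, N)) (e : 'cV[R]_k) :
  NN N 1 (fun x => C *m relu_vec (B *m x + c) + e).
Proof. by exists (NLayer B c (NOut C e)); split => //=; rewrite maxn0. Qed.

Lemma relu_vecE n (v : 'cV[R]_n) i : relu_vec v i 0 = Num.max (v i 0) 0.
Proof. by rewrite mxE. Qed.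

Lemma relu_vec_id d (x : 'cV[R]_d) : (forall i, 0 <= x i 0) -> relu_vec x = x.
Proof. by move=> x_ge0; apply/matrixP => i j; rewrite ord1 mxE max_l. Qed.

Lemma relu_vec_col_mx d1 d2 (u : 'cV[R]_d1) (v : 'cV[R]_d2) :
  relu_vec (col_mx u v) = col_mx (relu_vec u) (relu_vec v).
Proof. by apply/matrixP => i j; rewrite !mxE; case: (split i) => i'; rewrite mxE. Qed.

End NetCalculus.

Section Staircase.
Variable R : realDomainType.

Definition jump (g : nat -> R) k : R := g k - (if k is k'.+1 then g k' else 0).

Lemma sum_jump g K : \sum_(0 <= k < K.+1) jump g k = g K.
Proof.
by rewrite (@telescope_sumr_eq _ _ _ (fun k => if k is k'.+1 then g k' else 0)) ?subr0.
Qed.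

Lemma sum_jump_steps g T q M : (0 < q)%N -> (M %/ q < T)%N ->
  \sum_(k < T) jump g k * (k * q <= M)%N%:R = g (M %/ q)%N.
Proof.
move=> q_gt0 MqT.
rewrite -(big_mkord xpredT (fun k => jump g k * (k * q <= M)%N%:R)).
rewrite (@big_cat_nat _ _ _ (M %/ q)%N.+1 0 T _ _ (leq0n _) MqT) /=.
rewrite -[RHS]sum_jump -[RHS]addr0.
congr (_ + _).
  by apply: eq_big_nat => k /andP[_ kMq]; rewrite -leq_divRL // -ltnS kMq mulr1.
rewrite big_nat_cond big1 // => k /andP[/andP[Mqk _] _].
by rewrite -leq_divRL // leqNgt Mqk mulr0.
Qed.

Lemma relu_step (M c : nat) :
  Num.max (M%:R - c%:R + 1 : R) 0 - Num.max (M%:R - c%:R) 0 = (c <= M)%N%:R.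
Proof.
case: leqP => [cM | Mc].
  by rewrite -natrB // !max_l ?ler0n ?addr_ge0 // addrC addKr.
have : (M%:R + 1 <= c%:R :> R) by rewrite natr1 ler_nat.
by move=> Mc'; rewrite !max_r ?subrr //; lra.
Qed.

Variables (d T q : nat) (j0 : 'I_d).

Definition stair_rows : 'M[R]_(T, d) := \matrix_(t, j) ((j == j0) : nat)%:R.

Definition stair_bias (a : R) : 'cV[R]_T := \col_t (a - (t * q)%:R).

Lemma stair_rows_mul (x : 'cV[R]_d) t : (stair_rows *m x) t 0 = x j0 0.
Proof.
rewrite mxE (bigD1 j0) //= mxE eqxx mul1r big1 ?addr0 // => j /negbTE j_neq.
by rewrite mxE j_neq mul0r.
Qed.

Lemma stair_steps (x : 'cV[R]_d) (M : nat) : x j0 0 = M%:R ->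
  relu_vec (stair_rows *m x + stair_bias 1) - relu_vec (stair_rows *m x + stair_bias 0)
  = \col_t (t * q <= M)%N%:R.
Proof.
move=> xM; apply/matrixP => t j; rewrite ord1 mxE [X in _ + X]mxE !relu_vecE.
have pre a : (stair_rows *m x + stair_bias a) t 0 = M%:R - (t * q)%:R + a.
  by rewrite mxE stair_rows_mul xM mxE addrCA addrC.
by rewrite !pre addr0 mxE relu_step.
Qed.

Lemma NN_quotient_readout k (g : nat -> 'cV[R]_k) (E : 'M[R]_(k, d)) : (0 < q)%N ->
  exists f : 'cV[R]_d -> 'cV[R]_k, NN (T + T + d) 1 f /\
    forall (x : 'cV[R]_d) (M : nat), (forall i, 0 <= x i 0) -> x j0 0 = M%:R ->
      (M %/ q < T)%N -> f x = g (M %/ q)%N + E *m x.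
Proof.
move=> q_gt0.
pose D : 'M[R]_(k, T) := \matrix_(o, t) jump (fun K => g K o 0) t.
pose B := col_mx (col_mx stair_rows stair_rows) 1%:M.
pose c := col_mx (col_mx (stair_bias 1) (stair_bias 0)) (0 : 'cV[R]_d).
pose C := row_mx (row_mx D (- D)) E.
exists (fun x => C *m relu_vec (B *m x + c) + 0); split; first exact: NN_layer.
move=> x M x_ge0 xM MqT.
rewrite addr0 !mul_col_mx !add_col_mx mul1mx addr0 !relu_vec_col_mx (relu_vec_id x_ge0).
rewrite !mul_row_col mulNmx -mulmxBr (stair_steps xM).
congr (_ + _); apply/matrixP => o j; rewrite ord1 !mxE.
rewrite -(sum_jump_steps (fun K => g K o 0) q_gt0 MqT).
by apply: eq_bigr => t _; rewrite !mxE.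
Qed.

End Staircase.

Section BinaryValue.
Variable xb : nat -> bool.
Local Open Scope nat_scope.

Definition bin a b : nat := \sum_(a <= i < b) xb i.+1 * 2 ^ (b - i.+1).

Lemma bin_nil a : bin a a = 0.
Proof. by rewrite /bin big_geq. Qed.

Lemma bin_bit a : bin a a.+1 = xb a.+1.
Proof. by rewrite /bin big_nat1 subnn muln1. Qed.

Lemma bin_cat a c b : a <= c -> c <= b -> bin a b = bin a c * 2 ^ (b - c) + bin c b.
Proof.
move=> le_ac le_cb.
rewrite /bin (@big_cat_nat _ _ _ c a b _ _ le_ac le_cb) /= big_distrl /=.
congr (_ + _); apply: eq_big_nat => i /andP[_ lt_ic].
by rewrite -mulnA -expnD; congr (_ * 2 ^ _); lia.
Qed.

Lemma bin_ltn a b : a <= b -> bin a b < 2 ^ (b - a).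
Proof.
move=> /subnKC <-; rewrite addKn.
elim: (b - a) => [|k IH]; first by rewrite addn0 bin_nil.
rewrite addnS (@bin_cat a (a + k)) ?leq_addr // subSn // subnn bin_bit expn1 expnS.
by case: (xb _); lia.
Qed.

Lemma bin_div a c b : a <= c -> c <= b -> bin a b %/ 2 ^ (b - c) = bin a c.
Proof.
move=> le_ac le_cb; rewrite (bin_cat le_ac le_cb) divnMDl ?expn_gt0 //.
by rewrite divn_small ?addn0 ?bin_ltn.
Qed.

Lemma bin_mod a c b : a <= c -> c <= b -> bin a b %% 2 ^ (b - c) = bin c b.
Proof.
by move=> le_ac le_cb; rewrite (bin_cat le_ac le_cb) modnMDl modn_small ?bin_ltn.
Qed.

Lemma bin_digit a b : a < b -> (bin 0 b %/ 2 ^ (b - a.+1)) %% 2 = xb a.+1.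
Proof.
move=> lt_ab.
by rewrite bin_div // -(bin_bit a) -(bin_mod (leq0n a) (leqnSn a)) subSnn.
Qed.

End BinaryValue.

Section BinarySums.
Variable R : numFieldType.
Implicit Type xb : nat -> bool.

Lemma two_expr_neq0 k : (2%:R : R) ^+ k != 0.
Proof. by rewrite expf_neq0 // pnatr_eq0. Qed.

Lemma sum_frac_bin xb a b : (a <= b)%N ->
  \sum_(a.+1 <= i < b.+1) 2%:R ^- (i - a) * (xb i)%:R
  = (bin xb a b)%:R / 2%:R ^+ (b - a) :> R.
Proof.
move=> le_ab; rewrite big_add1 /= natr_sum mulr_suml.
apply: eq_big_nat => i /andP[le_ai lt_ib].
rewrite natrM natrX (_ : (b - a = (b - i.+1) + (i.+1 - a))%N); last by lia.
by rewrite exprD invfM mulrA mulfK ?two_expr_neq0 // mulrC.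
Qed.

Lemma sum_int_bin xb m :
  \sum_(1 <= i < m.+1) 2%:R ^+ (m - i) * (xb i)%:R = (bin xb 0 m)%:R :> R.
Proof.
by rewrite big_add1 /= natr_sum; apply: eq_big_nat => i _; rewrite natrM natrX mulrC.
Qed.

Lemma scaled_sum_bin xb n :
  2%:R ^+ n * \sum_(1 <= i < n.+1) 2%:R ^- i * (xb i)%:R = (bin xb 0 n)%:R :> R.
Proof.
have := sum_frac_bin xb (leq0n n); under eq_bigr do rewrite subn0; rewrite subn0 => ->.
by rewrite mulrC divfK ?two_expr_neq0.
Qed.

End BinarySums.

Lemma NN_binary_digits (R : realFieldType) m n : (m <= n)%N ->
  exists f : 'cV[R]_1 -> 'cV[R]_m.+1,
     NN (2 ^ (m + 2) + 1) 1 f /\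
     forall xb : nat -> bool,
       f (const_mx (\sum_(1 <= i < n.+1) (2%:R ^- i) * (xb i)%:R)) =
       \col_(j < m.+1)
          (if (j < m)%N then (xb j.+1)%:R
           else \sum_(m.+1 <= i < n.+1) (2%:R ^- (i - m)) * (xb i)%:R).
Proof.
move=> le_mn.
pose digits K : 'cV[R]_m.+1 :=
  \col_o (if (o < m)%N then ((K %/ 2 ^ (m - o.+1)) %% 2)%N%:R else - K%:R).
pose E : 'M[R]_(m.+1, 1) := \col_o (if (o < m)%N then 0 else 2%:R ^- (n - m)).
have [f [NNf ef]] := NN_quotient_readout (2 ^ m) 0 digits E (expn_gt0 2 (n - m)).
exists (f \o fun x => (2%:R ^+ n)%:M *m x + 0); split.
  have := NN_comp (NN_affine 0 (2%:R ^+ n)%:M 0) NNf.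
  by apply: NN_widen; rewrite max0n expnD; lia.
move=> xb /=; set M := bin xb 0 n.
have -> : (2%:R ^+ n)%:M *m const_mx (\sum_(1 <= i < n.+1) 2%:R ^- i * (xb i)%:R) + 0
          = const_mx M%:R :> 'cV[R]_1.
  by apply/matrixP => i j; rewrite addr0 mul_scalar_mx !mxE scaled_sum_bin.
have MqE : (M %/ 2 ^ (n - m) = bin xb 0 m)%N by rewrite bin_div.
have MqT : (M %/ 2 ^ (n - m) < 2 ^ m)%N.
  by rewrite MqE; have := bin_ltn xb (leq0n m); rewrite subn0.
have x_ge0 i : 0 <= (const_mx M%:R : 'cV[R]_1) i 0 by rewrite mxE ler0n.
rewrite (ef _ M x_ge0) ?mxE // MqE.
apply/matrixP => o j; rewrite ord1 !mxE big_ord1 !mxE.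
case: ifP => lt_om; first by rewrite bin_digit // mul0r addr0.
rewrite (sum_frac_bin _ _ le_mn) /M (bin_cat xb (leq0n m) le_mn) natrD natrM natrX.
by field; rewrite two_expr_neq0.
Qed.

Section Cv2.
Variable R : pzRingType.

Definition cv2 (a b : R) : 'cV[R]_2 := \col_(i < 2) (if i == 0 then a else b).

Lemma cv2E1 a b : cv2 a b 1 0 = b.
Proof. by rewrite mxE. Qed.

Lemma add_cv2 a b c e : cv2 a b + cv2 c e = cv2 (a + c) (b + e).
Proof. by apply/matrixP => i j; rewrite !mxE; case: ifP. Qed.

Lemma mul_diag_cv2 a b u v : diag_mx (cv2 a b)^T *m cv2 u v = cv2 (a * u) (b * v).
Proof. by apply/matrixP => i j; rewrite mul_diag_mx !mxE; case: ifP. Qed.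

End Cv2.

Section Peeling.
Variables (R : realFieldType) (m n s : nat).
Hypothesis le_mn : (m <= n)%N.

Definition prefix_len l := minn m (s * l).

Definition peel_state xb l : 'cV[R]_2 :=
  cv2 (bin xb 0 (prefix_len l))%:R (bin xb (prefix_len l) n)%:R.

Lemma prefix_len_mono l : (prefix_len l <= prefix_len l.+1)%N.
Proof. by rewrite /prefix_len mulnS; lia. Qed.

Lemma prefix_len_le l : (prefix_len l <= n)%N.
Proof. by rewrite /prefix_len; lia. Qed.

Lemma prefix_len_step l : (prefix_len l.+1 - prefix_len l <= s)%N.
Proof. by rewrite /prefix_len mulnS; lia. Qed.

Lemma NN_peel_step l : exists f : 'cV[R]_2 -> 'cV[R]_2,
  NN (2 ^ s + 2 ^ s + 2) 1 f /\ forall xb, f (peel_state xb l) = peel_state xb l.+1.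
Proof.
set q := (2 ^ (n - prefix_len l.+1))%N.
pose g K : 'cV[R]_2 := cv2 K%:R (- (K * q)%:R).
pose E : 'M[R]_2 := diag_mx (cv2 (2%:R ^+ (prefix_len l.+1 - prefix_len l)) 1)^T.
have [f [NNf ef]] := NN_quotient_readout (2 ^ s) 1 g E (expn_gt0 2 (n - prefix_len l.+1)).
exists f; split => // xb.
have MqE : (bin xb (prefix_len l) n %/ q = bin xb (prefix_len l) (prefix_len l.+1))%N.
  by rewrite bin_div ?prefix_len_mono ?prefix_len_le.
have MqT : (bin xb (prefix_len l) n %/ q < 2 ^ s)%N.
  rewrite MqE; apply: leq_trans (bin_ltn _ (prefix_len_mono l)) _.
  by rewrite leq_pexp2l ?prefix_len_step.
have x_ge0 i : 0 <= peel_state xb l i 0 by rewrite mxE; case: ifP.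
rewrite (ef _ _ x_ge0 (cv2E1 _ _) MqT) MqE mul_diag_cv2 add_cv2 /peel_state.
rewrite (bin_cat xb (leq0n _) (prefix_len_mono l)).
rewrite (bin_cat xb (prefix_len_mono l) (prefix_len_le l.+1)).
by rewrite !natrD !natrM natrX; congr cv2; ring.
Qed.

Lemma NN_peel k l : exists f : 'cV[R]_2 -> 'cV[R]_2,
  NN (2 ^ s + 2 ^ s + 2) k f /\ forall xb, f (peel_state xb l) = peel_state xb (l + k).
Proof.
elim: k l => [|k IH] l.
  exists (fun x => 1%:M *m x + 0); split; first exact: NN_affine.
  by move=> xb; rewrite mul1mx addr0 addn0.
have [f [NNf ef]] := NN_peel_step l; have [h [NNh eh]] := IH l.+1.
exists (h \o f); split; first by have := NN_comp NNf NNh; rewrite maxnn add1n.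
by move=> xb /=; rewrite ef eh addSnnS.
Qed.

End Peeling.

Lemma leq_mul_ceil_div m L : (0 < L)%N -> (m <= ceil_div m L * L)%N.
Proof.
move=> L_gt0; rewrite /ceil_div.
have := divn_eq (m + L.-1) L; have := ltn_pmod (m + L.-1) L_gt0; lia.
Qed.

Lemma NN_binary_split (R : realFieldType) m n L : (m <= n)%N -> (1 <= L)%N ->
  exists f : 'cV[R]_1 -> 'cV[R]_2,
    NN (2 ^ (ceil_div m L + 2) + 2) L f /\
    forall xb : nat -> bool,
      f (const_mx (\sum_(1 <= i < n.+1) (2%:R ^- i) * (xb i)%:R)) =
      \col_(j < 2)
         (if j == 0 :> 'I_2
          then \sum_(1 <= i < m.+1) (2%:R ^+ (m - i)) * (xb i)%:R
          else \sum_(m.+1 <= i < n.+1) (2%:R ^- (i - m)) * (xb i)%:R).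
Proof.
move=> le_mn L_gt0; set s := ceil_div m L.
have [h [NNh eh]] := NN_peel R s le_mn L 0.
pose A_in : 'M[R]_(2, 1) := cv2 0 (2%:R ^+ n).
pose A_out : 'M[R]_2 := diag_mx (cv2 1 (2%:R ^- (n - m)))^T.
exists ((fun y => A_out *m y + 0) \o h \o (fun x => A_in *m x + 0)); split.
  have := NN_comp (NN_comp (NN_affine 0 A_in 0) NNh) (NN_affine 0 A_out 0).
  by rewrite add0n addn0 max0n maxn0; apply: NN_widen; rewrite expnD; lia.
move=> xb /=.
have -> : A_in *m const_mx (\sum_(1 <= i < n.+1) 2%:R ^- i * (xb i)%:R) + 0
          = peel_state R m n s xb 0.
  apply/matrixP => i j; rewrite ord1 addr0 !mxE big_ord1 !mxE.
  rewrite /prefix_len muln0 minn0 bin_nil.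
  by case: ifP => _; rewrite ?mul0r ?scaled_sum_bin.
have prefix_len_L : prefix_len m s L = m by apply/minn_idPl; apply: leq_mul_ceil_div.
rewrite eh add0n /peel_state prefix_len_L addr0 mul_diag_cv2 mul1r.
by rewrite sum_int_bin (sum_frac_bin _ _ le_mn) mulrC.
Qed.

Theorem mainTheorem5 (m n : nat) (hmn : (m <= n)%N) :
  (exists f : 'cV[Rdefinitions.R]_1 -> 'cV[Rdefinitions.R]_m.+1,
     NN (2 ^ (m + 2) + 1) 1 f /\
     forall xb : nat -> bool,
       f (const_mx (\sum_(1 <= i < n.+1) (2%:R ^- i) * (xb i)%:R)) =
       \col_(j < m.+1)
          (if (j < m)%N then (xb j.+1)%:R
           else \sum_(m.+1 <= i < n.+1) (2%:R ^- (i - m)) * (xb i)%:R))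
  /\
  (forall L : nat, (1 <= L)%N ->
   exists f : 'cV[Rdefinitions.R]_1 -> 'cV[Rdefinitions.R]_2,
     NN (2 ^ (ceil_div m L + 2) + 2) L f /\
     forall xb : nat -> bool,
       f (const_mx (\sum_(1 <= i < n.+1) (2%:R ^- i) * (xb i)%:R)) =
       \col_(j < 2)
          (if j == 0 :> 'I_2
           then \sum_(1 <= i < m.+1) (2%:R ^+ (m - i)) * (xb i)%:R
           else \sum_(m.+1 <= i < n.+1) (2%:R ^- (i - m)) * (xb i)%:R)).
Proof.
split; first exact: NN_binary_digits.
by move=> L; apply: NN_binary_split.
Qed.
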